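(* Let $G$ be an infinite, countably based, quasi-semisimple profinite group with $G/\mathrm{Z}(G)\cong\prod_{i\in\mathbb{N}}S_i$. Then $m_n(G)=\#\{i\in\mathbb{N}\mid R_n(S_i)>1\}$ is polynomially bounded as a function of $n$ if and only if $\widetilde{m}_n(G)=\#\{i\in\mathbb{N}\mid R_n(\widetilde{S}_i)>1\}$ is polynomially bounded as a function of $n$.
   Context: A profinite group $G$ is quasi-semisimple if $G=\overline{[G,G]}$ and $G/\mathrm{Z}(G)$ is a cartesian product of non-abelian finite simple groups $S_i$. $\widetilde{S}_i$ denotes the universal covering group (Schur cover) of $S_i$. For a finite group $H$, $R_n(H)$ is the number of isomorphism classes of irreducible complex representations of $H$ of dimension at most $n$. *)

From HB Require Import structures.
From mathcomp Require Import all_boot all_order all_algebra all_fingroup all_solvable all_field all_character.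
From mathcomp Require Import all_classical all_reals topology.
Set Implicit Arguments. Unset Strict Implicit. Unset Printing Implicit Defensive.
Import Order.TTheory GRing.Theory Num.Theory.

Local Open Scope classical_set_scope.

Definition group_law (T : Type) (mul : T -> T -> T) (inv : T -> T) (one : T) :=
  [/\ forall x y z, mul x (mul y z) = mul (mul x y) z,
      forall x, mul one x = x,
      forall x, mul x one = x,
      forall x, mul (inv x) x = one &
      forall x, mul x (inv x) = one].

Definition profinite_group (T : topologicalType) (mul : T -> T -> T)
    (inv : T -> T) (one : T) :=
  [/\ group_law mul inv one,
      continuous (fun p : T * T => mul p.1 p.2),
      continuous inv &
      [/\ compact [set: T],
      hausdorff_space T &
      totally_disconnected [set: T]]].

Definition countably_based (T : topologicalType) := @second_countable T.

Definition is_subgroup (T : Type) (mul : T -> T -> T) (inv : T -> T) (one : T)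
    (H : set T) :=
  [/\ H one, forall x y, H x -> H y -> H (mul x y) & forall x, H x -> H (inv x)].

Definition gen_subgroup (T : Type) (mul : T -> T -> T) (inv : T -> T) (one : T)
    (A : set T) : set T :=
  fun x => forall H, is_subgroup mul inv one H -> A `<=` H -> H x.

Definition derived_subgroup (T : Type) (mul : T -> T -> T) (inv : T -> T)
    (one : T) : set T :=
  gen_subgroup mul inv one
    [set c | exists x y, c = mul (mul (inv x) (inv y)) (mul x y)].

Definition center_set (T : Type) (mul : T -> T -> T) : set T :=
  [set z | forall g, mul z g = mul g z].

(* phi : G -> prod_i S_i is a continuous surjective group homomorphism with
   kernel Z(G), i.e. it induces an isomorphism of profinite groups
   G/Z(G) ~= prod_i S_i (continuous bijections between compact Hausdorff
   spaces are homeomorphisms).  The target carries the product topology of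
   the discrete groups S_i; continuity means each coordinate is locally
   constant. *)
Definition center_quotient_iso (T : topologicalType) (mul : T -> T -> T)
    (inv : T -> T) (one : T) (S : nat -> finGroupType)
    (phi : T -> forall i, S i) :=
  [/\ forall x y i, phi (mul x y) i = (phi x i * phi y i)%g,
      forall f : (forall i, S i), exists x, forall i, phi x i = f i,
      forall x, (forall i, phi x i = 1%g) <-> center_set mul x &
      forall i (s : S i), open [set x | phi x i = s]].

Local Close Scope classical_set_scope.
Local Open Scope group_scope.

Definition nonabelian_simple (S : finGroupType) :=
  simple [set: S]%SET /\ ~~ abelian [set: S]%SET.

Definition perfect (E : finGroupType) := [~: [set: E]%SET, [set: E]%SET] = [set: E]%SET.

Definition central_extension (E S : finGroupType)
    (f : {morphism [set: E]%SET >-> S}) :=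
  f @* [set: E]%SET = [set: S]%SET /\ 'ker f \subset 'Z([set: E]%SET).

Definition universal_cover (Et S : finGroupType) :=
  perfect Et /\
  exists f : {morphism [set: Et]%SET >-> S},
    central_extension f /\
    forall (E : finGroupType) (g : {morphism [set: E]%SET >-> S}),
      central_extension g ->
      exists h : {morphism [set: Et]%SET >-> E},
        (forall x, g (h x) = f x) /\
        forall h' : {morphism [set: Et]%SET >-> E},
          (forall x, g (h' x) = f x) -> forall x, h' x = h x.

Definition Rn (n : nat) (H : finGroupType) : nat :=
  #|[set i : Iirr [set: H]%SET | ('chi_i 1%g <= n%:R)%R]|.

(* Phrased via initial segments so
   that an infinite set is correctly treated as unbounded. *)
Definition poly_bounded_count (P : nat -> nat -> bool) :=
  exists c d : nat, forall n, 0 < n ->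
    forall N, #|[set i : 'I_N | P n i]| <= c * n ^ d.

From mathcomp Require Import all_boot all_order all_algebra all_fingroup all_solvable all_field all_character.
From mathcomp Require Import all_classical all_reals topology.

(* Inflation along the cover St -> S shows R_n(S) > 1 -> R_n(St) > 1.
   Conversely, for a non-principal irreducible chi of the perfect group St,
   chi * chi^* has kernel Z(chi), which contains the central kernel of
   St -> S, and it cannot have only principal constituents (else Z(chi) = St,
   chi would be linear, hence trivial on St = St').  A non-principal
   constituent has degree at most chi(1)^2 and descends to S, so
   R_n(St) > 1 -> R_(n^2)(S) > 1.  Both implications preserve polynomial
   bounds on the counts. *)

Set Implicit Arguments.
Unset Strict Implicit.
Unset Printing Implicit Defensive.
Import Order.TTheory GRing.Theory Num.Theory.

Section IrrMulConjC.

Variables (gT : finGroupType) (G : {group gT}).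
Local Open Scope ring_scope.

Lemma irr1_ge1 (i : Iirr G) : 1 <= 'chi_i 1%g.
Proof. by have := irr1_gt0 i; rewrite irr1_degree ltr0n ler1n. Qed.

Lemma irr_mul_conjC_char (i : Iirr G) : 'chi_i * ('chi_i)^*%CF \is a character.
Proof. by rewrite rpredM ?cfConjC_char ?irr_char. Qed.

Lemma cfker_irr_mul_conjC (i : Iirr G) :
  cfker ('chi_i * ('chi_i)^*%CF) = 'Z('chi_i)%CF.
Proof.
apply/setP=> x; case Gx: (x \in G); last first.
  apply/idP/idP; first by move/(fintype.subsetP (cfker_sub _)); rewrite Gx.
  by move/(fintype.subsetP (cfcenter_sub _)); rewrite Gx.
rewrite cfkerEchar ?irr_mul_conjC_char // inE Gx irr_cfcenterE //.
rewrite !cfunE -!normCK (ger0_norm (char1_ge0 (irr_char i))).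
by rewrite eqrXn2 // char1_ge0 ?irr_char.
Qed.

Lemma irr1_mul_conjC_constt (i j : Iirr G) :
  j \in irr_constt ('chi_i * ('chi_i)^*%CF) -> 'chi_j 1%g <= 'chi_i 1%g ^+ 2.
Proof.
move=> /(char1_ge_constt (irr_mul_conjC_char i)).
by rewrite !cfunE (irr1_degree i) rmorph_nat -expr2.
Qed.

Lemma perfect_irr_mul_conjC_constt (i : Iirr G) :
  G^`(1)%g = G -> i != 0 ->
  exists2 j, j \in irr_constt ('chi_i * ('chi_i)^*%CF) & j != 0.
Proof.
move=> perfG i_neq0; apply/exists_inP; apply: contraTT i_neq0.
move=> /exists_inPn-noj; rewrite negbK -subGcfker.
have ker_psi : cfker ('chi_i * ('chi_i)^*%CF) = G.
  apply/eqP; rewrite finset.eqEsubset cfker_sub cfkerE ?irr_mul_conjC_char //.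
  rewrite finset.subsetI subxx; apply/bigcapsP => j j_constt.
  by move: (noj j j_constt); rewrite negbK => /eqP->; rewrite cfker_irr0.
have [+ _] := irr1_bound i.
rewrite -cfker_irr_mul_conjC ker_psi indexgg irr1_degree -natrX ler_nat.
rewrite -(exp1n 2) leq_sqr => deg_le1.
have lin : 'chi_i \is a linear_char.
  rewrite qualifE/= irr_char irr1_degree pnatr_eq1 eqn_leq deg_le1 /=.
  by rewrite -(ltr0n algC) -irr1_degree irr1_gt0.
by rewrite -{1}perfG -lin_irr_der1.
Qed.

End IrrMulConjC.

Lemma Rn_gt1P (n : nat) (H : finGroupType) :
  (1 < Rn n H)%N <->
  exists2 i : Iirr [set: H]%G, (i != 0)%R & ('chi_i 1%g <= n%:R)%R.
Proof.
split.
  case/card_gt1P => x [y [+ + x_neq_y]]; rewrite !inE => x_le y_le.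
  have [x0|x_neq0] := eqVneq x 0%R; last by exists x.
  by exists y; rewrite // eq_sym -x0.
case=> i i_neq0 i_le; apply/card_gt1P; exists 0%R, i.
by rewrite !inE i_le eq_sym i_neq0 irr0 cfun11 (le_trans (irr1_ge1 i) i_le).
Qed.

Section CentralExtension.

Variables (E S : finGroupType) (f : {morphism [set: E] >-> S}).
Hypothesis f_onto : (f @* [set: E])%g = [set: S].
Local Open Scope ring_scope.

Lemma Rn_gt1_morph (n : nat) : (1 < Rn n S)%N -> (1 < Rn n E)%N.
Proof.
have fE : (f @* [set: E]%G)%G = [set: S]%G by apply/val_inj.
move/Rn_gt1P; rewrite -fE => -[i i_neq0 i_le]; apply/Rn_gt1P.
exists (morph_Iirr i); first by rewrite morph_Iirr_eq0.
by rewrite morph_IirrE // cfMorph1.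
Qed.

Lemma irr_quo_ker_morph (j : Iirr [set: E]%G) :
  j != 0 -> ('ker f \subset cfker 'chi_j)%g ->
  exists2 k : Iirr [set: S]%G, k != 0 & 'chi_k 1%g = 'chi_j 1%g.
Proof.
move=> j_neq0 ker_sub.
have [g injg img] := first_isom f.
have isoG : isom ([set: E] / 'ker f)%g [set: S]%G g.
  by apply/isomP; split; rewrite // img.
have /irrP[k def_k] : cfIsom isoG ('chi_j / 'ker f)%CF \in irr [set: S]%G.
  by rewrite cfIsom_irr cfQuo_irr ?ker_normal ?mem_irr.
exists k.
  by rewrite -irr_eq1 -def_k cfIsom_eq1 cfQuo_eq1 ?ker_normal ?irr_eq1.
by rewrite -def_k cfIsom1 cfQuo1 ?ker_normal.
Qed.

Hypotheses (ker_central : ('ker f \subset 'Z([set: E]))%g) (perfE : perfect E).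

Lemma Rn_gt1_cover (n : nat) : (1 < Rn n E)%N -> (1 < Rn (n ^ 2) S)%N.
Proof.
case/Rn_gt1P => i i_neq0 i_le; apply/Rn_gt1P.
have perfG : ([set: E]%G)^`(1)%g = [set: E]%G by rewrite derg1 perfE.
have [j j_constt j_neq0] := perfect_irr_mul_conjC_constt perfG i_neq0.
have ker_sub : ('ker f \subset cfker 'chi_j)%g.
  apply: fintype.subset_trans ker_central _; rewrite -cap_cfcenter_irr.
  apply: fintype.subset_trans (finset.bigcap_inf i isT) _.
  by rewrite -cfker_irr_mul_conjC cfker_constt ?irr_mul_conjC_char.
have [k k_neq0 k_deg] := irr_quo_ker_morph j_neq0 ker_sub.
exists k; rewrite // k_deg (le_trans (irr1_mul_conjC_constt j_constt)) //.
by rewrite natrX lerXn2r ?nnegrE ?char1_ge0 ?irr_char ?ler0n.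
Qed.

End CentralExtension.

Lemma poly_bounded_count_pow (P Q : nat -> nat -> bool) (k : nat) :
  (forall n i, P n i -> Q (n ^ k.+1) i)%N ->
  poly_bounded_count Q -> poly_bounded_count P.
Proof.
move=> PQ [c [d boundQ]]; exists c, (k.+1 * d)%N => n n_gt0 N.
have nk_gt0 : (0 < n ^ k.+1)%N by rewrite expn_gt0 n_gt0.
rewrite expnM; apply: leq_trans (boundQ _ nk_gt0 N).
by apply: subset_leq_card; apply/fintype.subsetP => i; rewrite !inE; apply: PQ.
Qed.

Local Open Scope classical_set_scope.

Theorem corollary3p2
  (G : topologicalType) (mul : G -> G -> G) (inv : G -> G) (one : G)
  (S St : nat -> finGroupType) (phi : G -> forall i, S i) :
  profinite_group mul inv one ->
  countably_based G ->
  infinite_set [set: G] ->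
  (* quasi-semisimple: G = closure of [G,G], G/Z(G) = prod of nonabelian simple *)
  closure (derived_subgroup mul inv one) = [set: G] ->
  (forall i, nonabelian_simple (S i)) ->
  center_quotient_iso mul inv one phi ->
  (forall i, universal_cover (St i) (S i)) ->
  (poly_bounded_count (fun n i => 1 < Rn n (S i))
   <-> poly_bounded_count (fun n i => 1 < Rn n (St i)))%N.
Proof.
move=> _ _ _ _ _ _ cover; split.
- apply: (@poly_bounded_count_pow _ _ 1) => n i.
  have [perfSt [f [[f_onto ker_central] _]]] := cover i.
  exact: (Rn_gt1_cover f_onto ker_central perfSt).
- apply: (@poly_bounded_count_pow _ _ 0) => n i.
  have [_ [f [[f_onto _] _]]] := cover i.
  rewrite expn1; exact: (Rn_gt1_morph f_onto).
Qed.
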